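(* For the hypercube $Q_n$: (1) $str(Q_2)\ge6$, $str(Q_3)\ge11$, $str(Q_4)\ge21$; (2) $str(Q_n)\ge 2^n+4n-12$ for $5\le n\le 9$; (3) $str(Q_{2m})\ge 2^{2m}+m^2+4$ for all $m\ge5$; (4) $str(Q_{2m-1})\ge 2^{2m-1}+m^2-m+4$ for all $m\ge6$.
   Context: $Q_n$ is the $n$-dimensional hypercube (vertex set $\mathbb Z_2^n$, adjacency iff differing in exactly one coordinate), of order $2^n$. For a graph $G$ of order $p$, a numbering is a bijection $f:V(G)\to[1,p]$; $str_f(G)=\max\{f(u)+f(v): uv\in E(G)\}$ and $str(G)=\min_f str_f(G)$. *)

From mathcomp Require Import all_boot.
Set Implicit Arguments. Unset Strict Implicit. Unset Printing Implicit Defensive.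

(* str_f(G) = max { f u + f v : uv edge } (ordered pairs; symmetric e gives same max). *)
Definition strf (T : finType) (e : rel T) (f : T -> nat) : nat :=
  \max_(p : T * T | e p.1 p.2) (f p.1 + f p.2).

(* A numbering is a bijection V -> [1, p], represented as a bijection
   g : V -> 'I_p (injective with #|V| = p), with f v = (g v).+1.
   str(G) = min over numberings of str_f(G).  The default 2*#|T| of the
   min is never attained since every str_f <= 2p - 1 and numberings exist. *)
Definition str (T : finType) (e : rel T) : nat :=
  \big[minn/(2 * #|T|)]_(g : {ffun T -> 'I_#|T|} | injectiveb g)
     strf e (fun v => (g v).+1).

Definition cube (n : nat) := {ffun 'I_n -> bool}.
Definition qadj (n : nat) : rel {ffun 'I_n -> bool} :=
  fun u v => #|[set i | u i != v i]| == 1.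

From mathcomp Require Import all_boot zify.
Set Implicit Arguments. Unset Strict Implicit. Unset Printing Implicit Defensive.

(* Let g be a numbering of a graph of order p and S the set of the k vertices
   carrying the top labels p-k+1, ..., p.  Some vertex of the neighbourhood N(S)
   carries a label >= |N(S)| and is adjacent to a vertex of S, whose label is
   >= p-k+1; hence str(G) >= p + 1 - k + min { |N(S)| : |S| = k }.

   Q_n is regular of degree r = n, two distinct vertices have at most two
   common neighbours, and three vertices which pairwise have a common neighbour
   have a common neighbour.  In any graph with these properties, counting the paths x - u - y
   with x, y in S gives
       2|N(S)| + 2|S|(|S|-1) = 2|S|r + excess + defect,
   with excess = sum_u (d_S(u)-1)(d_S(u)-2) and defect = sum_{x<>y in S}
   (2 - #common neighbours of x, y), both nonnegative; four vertices of S force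
   excess + defect >= 6.  So |N(S)| >= |S|r - |S|(|S|-1), plus 3 when |S| >= 4. *)

Definition nbhd (T : finType) (e : rel T) (S : {set T}) : {set T} :=
  [set u | [exists v in S, e u v]].

Definition ncommon (T : finType) (e : rel T) (x y : T) : nat :=
  #|[set u | e u x && e u y]|.

Lemma card_top_labels p (k : nat) : k <= p -> #|[set i : 'I_p | p - k <= i]| = k.
Proof.
move=> kp.
rewrite -sum1_card -[RHS]muln1 -[in RHS](subKn kp) -sum_nat_const_nat big_geq_mkord.
by apply: eq_bigl => i; rewrite inE.
Qed.

Lemma max_label_ge_card (T : finType) (f : T -> nat) (A : {set T}) :
  {in A &, injective f} -> 0 < #|A| -> exists2 u, u \in A & #|A| <= (f u).+1.
Proof.
move=> finj /card_gt0P[u0 u0A].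
case: (arg_maxnP f u0A) => u uA umax; exists u => //.
rewrite cardE -(size_map f) -(size_iota 0 (f u).+1); apply: uniq_leq_size.
  by rewrite map_inj_in_uniq ?enum_uniq // => x y; rewrite !mem_enum; apply: finj.
move=> _ /mapP[x xA ->]; rewrite mem_iota add0n ltnS.
by apply: umax; rewrite mem_enum in xA.
Qed.

Section Strength.
Variables (T : finType) (e : rel T).
Hypothesis e_sym : symmetric e.
Local Notation p := #|T|.

(* Numberings into [1, p] have strength at most 2p; this makes the default
   value 2p of the minimum in [str] harmless. *)
Lemma strf_le_double (f : T -> nat) : (forall v, f v <= p) -> strf e f <= 2 * p.
Proof.
by move=> fp; apply/bigmax_leqP => q _; rewrite mul2n -addnn leq_add.
Qed.

Lemma str_ge B :
  (forall g : {ffun T -> 'I_p}, injective g -> B <= strf e (fun v => (g v).+1)) ->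
  B <= str e.
Proof.
move=> H; rewrite /str; apply: (big_ind (fun x => B <= x)).
- apply: leq_trans (H [ffun v => enum_rank v] _) (strf_le_double _) => [u v|v].
    by rewrite !ffunE => /enum_rank_inj.
  by rewrite ffunE.
- by move=> x y hx hy; rewrite leq_min hx hy.
- by move=> g /injectiveP; apply: H.
Qed.

Lemma card_top_set (g : {ffun T -> 'I_p}) k : injective g -> k <= p ->
  #|[set v | p - k <= g v]| = k.
Proof.
move=> ginj kp; have gbij : bijective g by apply: inj_card_bij ginj _; rewrite card_ord.
rewrite -[in RHS](card_top_labels kp) -(on_card_preimset (onW_bij _ gbij)).
by apply: eq_card => v; rewrite !inE.
Qed.

(* Main estimate: the highest-labelled neighbour of the top k-set, together
   with its partner in that set, has label sum >= p - k + 1 + |N(S)|. *)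
Lemma strf_ge_top_nbhd (g : {ffun T -> 'I_p}) k : injective g ->
  0 < #|nbhd e [set v | p - k <= g v]| ->
  p - k + 1 + #|nbhd e [set v | p - k <= g v]| <= strf e (fun v => (g v).+1).
Proof.
move=> ginj hN.
have g_nat_inj : injective (fun v => nat_of_ord (g v)) by move=> x y /ord_inj/ginj.
have [u] := max_label_ge_card (in2W g_nat_inj) hN.
rewrite inE => /exists_inP[v]; rewrite inE => hv huv hu.
have : (g v).+1 + (g u).+1 <= strf e (fun v => (g v).+1).
  by apply: (@leq_bigmax_cond _ (fun q : T * T => e q.1 q.2) _ (v, u)); rewrite /= e_sym.
lia.
Qed.

Lemma str_ge_nbhd k L : k <= p -> 0 < L ->
  (forall S : {set T}, #|S| = k -> L <= #|nbhd e S|) -> p + 1 + L - k <= str e.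
Proof.
move=> kp L0 HL; apply: str_ge => g ginj.
have hN := HL _ (card_top_set ginj kp).
apply: leq_trans (strf_ge_top_nbhd ginj (leq_trans L0 hN)); lia.
Qed.

End Strength.

Lemma card_set_sum (T : finType) (P : pred T) : #|[set u | P u]| = \sum_u P u.
Proof.
rewrite -sum1_card big_mkcond /=; apply: eq_bigr => u _.
by rewrite inE; case: (P u).
Qed.

Lemma sum_uniq_subset_le (T : finType) (s : seq T) (S : {set T}) (F : T -> nat) :
  uniq s -> {subset s <= S} -> \sum_(x <- s) F x <= \sum_(x in S) F x.
Proof.
move=> us sS; rewrite big_uniq // [X in _ <= X](bigID (mem s)) /=.
have -> : \sum_(x in S | x \in s) F x = \sum_(x in s) F x.
  by apply: eq_bigl => x; case: (boolP (x \in s)) => h; rewrite ?andbT ?andbF ?sS.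
exact: leq_addr.
Qed.

(* Pointwise form of the path-counting identity, for a vertex with d
   neighbours in S. *)
Lemma nat_pairs_identity d : 2 * (0 < d) + d * (d - 1) = 2 * d + (d - 1) * (d - 2).
Proof. by case: d => [|[|d]] //=; nia. Qed.

(* A vertex adjacent to t of four given vertices is a common neighbour of
   C(t,3) triples among them, and 3 C(t,3) <= 2 (t-1)(t-2). *)
Lemma triples_le_excess (p q r t : bool) :
  3 * ([&& p, q & r] + [&& p, q & t] + [&& p, r & t] + [&& q, r & t])
  <= 2 * ((p + q + r + t - 1) * (p + q + r + t - 2)).
Proof. by case: p; case: q; case: r; case: t. Qed.

(* The combinatorial core of the gain of 3: among four vertices, either all six
   pairs have common neighbours (and then so do the four triples), or some pair
   has none, which is paid for by the defect. *)
Lemma six_pairs_bound (pab pac pad pbc pbd pcd : bool) :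
  12 <= 3 * ([&& pab, pac & pbc] + [&& pab, pad & pbd] + [&& pac, pad & pcd]
             + [&& pbc, pbd & pcd])
        + 8 * (~~ pab + ~~ pac + ~~ pad + ~~ pbc + ~~ pbd + ~~ pcd).
Proof. by case: pab; case: pac; case: pad; case: pbc; case: pbd; case: pcd. Qed.

Section NeighbourhoodBound.
Variables (T : finType) (e : rel T) (r : nat).
Hypothesis e_regular : forall v, #|[set u | e u v]| = r.
Hypothesis ncommon_le2 : forall x y, x != y -> ncommon e x y <= 2.
Hypothesis common_nbr3 : forall x y w, x != y -> x != w -> y != w ->
  0 < ncommon e x y -> 0 < ncommon e x w -> 0 < ncommon e y w ->
  exists u, [&& e u x, e u y & e u w].
Variable S : {set T}.

Definition deg_in u : nat := \sum_(v in S) e u v.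

Definition excess : nat := \sum_u (deg_in u - 1) * (deg_in u - 2).

Definition defect : nat :=
  \sum_(x in S) \sum_(y in S) (x != y) * (2 - ncommon e x y).

Lemma card_nbhd : #|nbhd e S| = \sum_u (0 < deg_in u).
Proof.
rewrite /nbhd card_set_sum; apply: eq_bigr => u _; congr (nat_of_bool _).
rewrite /deg_in lt0n sum_nat_eq0; apply/existsP/forallPn => [[v /andP[vS uv]]|[v]].
  by exists v; rewrite negb_imply vS uv.
by rewrite negb_imply => /andP[vS uv]; exists v; rewrite vS; case: (e u v) uv.
Qed.

Lemma sum_deg_in : \sum_u deg_in u = #|S| * r.
Proof.
rewrite /deg_in exchange_big /= -sum_nat_const; apply: eq_bigr => v _.
by rewrite -(e_regular v) card_set_sum.
Qed.

Lemma deg_in_pairs u : deg_in u * (deg_in u - 1) =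
  \sum_(x in S) \sum_(y in S) (x != y) * (e u x && e u y).
Proof.
rewrite {1}/deg_in big_distrl /=; apply: eq_bigr => x xS.
rewrite [in RHS](bigD1 x xS) /= eqxx mul0n add0n.
rewrite (eq_bigr (fun y => e u x * e u y)); last first.
  by move=> y /andP[_ yx]; rewrite eq_sym yx mul1n mulnb.
rewrite -big_distrr /= mulnC /deg_in (bigD1 x xS) /=.
by case: (e u x); rewrite ?muln0 ?mul0n // muln1 mul1n add1n subn1.
Qed.

(* Counting the paths x - u - y with x <> y in S in two ways. *)
Lemma sum_deg_in_pairs : \sum_u deg_in u * (deg_in u - 1) =
  \sum_(x in S) \sum_(y in S) (x != y) * ncommon e x y.
Proof.
rewrite (eq_bigr _ (fun u _ => deg_in_pairs u)) exchange_big; apply: eq_bigr => x _.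
rewrite exchange_big; apply: eq_bigr => y _.
by rewrite /ncommon card_set_sum big_distrr.
Qed.

(* Each ordered pair of distinct vertices of S accounts for exactly 2 common
   neighbours, present or missing. *)
Lemma sum_ncommon_defect :
  \sum_(x in S) \sum_(y in S) (x != y) * ncommon e x y + defect
  = 2 * (#|S| * (#|S| - 1)).
Proof.
rewrite -big_split mulnCA -sum_nat_const; apply: eq_bigr => x xS; rewrite -big_split /=.
rewrite (bigD1 x xS) /= eqxx add0n (eq_bigr (fun => 2)); last first.
  by move=> y /andP[_ yx]; rewrite eq_sym yx !mul1n subnKC // ncommon_le2 // eq_sym.
rewrite (cardsD1 x S) xS add1n subn1 /= mulnC -sum_nat_const.
by apply: eq_bigl => y; rewrite !inE andbC.
Qed.

Lemma nbhd_identity :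
  2 * #|nbhd e S| + 2 * (#|S| * (#|S| - 1)) = 2 * (#|S| * r) + excess + defect.
Proof.
rewrite -sum_ncommon_defect addnA -sum_deg_in_pairs card_nbhd -sum_deg_in /excess.
rewrite !big_distrr -!big_split /=; congr (_ + _); apply: eq_bigr => u _.
exact: nat_pairs_identity.
Qed.

Lemma nbhd_lower_bound : #|S| * r <= #|nbhd e S| + #|S| * (#|S| - 1).
Proof. have := nbhd_identity; lia. Qed.

Definition ncommon3 x y w : nat := \sum_u [&& e u x, e u y & e u w].

Lemma ncommonC x y : ncommon e x y = ncommon e y x.
Proof. by apply: eq_card => u; rewrite !inE andbC. Qed.

Lemma ncommon3_pos x y w : x != y -> x != w -> y != w ->
  [&& 0 < ncommon e x y, 0 < ncommon e x w & 0 < ncommon e y w] <= ncommon3 x y w.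
Proof.
move=> hxy hxw hyw; case: and3P => // [[pxy pxw pyw]].
have [u hu] := common_nbr3 hxy hxw hyw pxy pxw pyw.
by rewrite /ncommon3 (bigD1 u) //= hu.
Qed.

Section FourVertices.
Variables a b c d : T.
Hypothesis abcd_uniq : uniq [:: a; b; c; d].
Hypothesis abcd_in : {subset [:: a; b; c; d] <= S}.

Lemma excess_ge_triples :
  3 * (ncommon3 a b c + ncommon3 a b d + ncommon3 a c d + ncommon3 b c d)
  <= 2 * excess.
Proof.
rewrite /ncommon3 /excess -!big_split !big_distrr /=; apply: leq_sum => u _.
apply: leq_trans (triples_le_excess (e u a) (e u b) (e u c) (e u d)) _.
rewrite leq_mul2l; apply/orP; right; apply: leq_mul; apply: leq_sub2r;
  have := sum_uniq_subset_le (fun v => e u v : nat) abcd_uniq abcd_in;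
  by rewrite !big_cons big_nil addn0 !addnA.
Qed.

(* The defect contains the missing common neighbours of the pairs among a, b,
   c, d, each unordered pair being counted twice. *)
Lemma defect_ge_pairs :
  2 * ((2 - ncommon e a b) + (2 - ncommon e a c) + (2 - ncommon e a d)
       + (2 - ncommon e b c) + (2 - ncommon e b d) + (2 - ncommon e c d))
  <= defect.
Proof.
apply: leq_trans (_ : \sum_(x <- [:: a; b; c; d]) \sum_(y <- [:: a; b; c; d])
                        (x != y) * (2 - ncommon e x y) <= defect).
  move: abcd_uniq; rewrite /= !inE !negb_or => /and4P[/and3P[ab ac ad] /andP[bc bd] cd _].
  have ne_sym (x y : T) : x != y -> (y != x) = true by rewrite eq_sym.
  rewrite !big_cons !big_nil !eqxx ab ac ad bc bd cd (ne_sym _ _ ab) (ne_sym _ _ ac).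
  rewrite (ne_sym _ _ ad) (ne_sym _ _ bc) (ne_sym _ _ bd) (ne_sym _ _ cd).
  rewrite (ncommonC b a) (ncommonC c a) (ncommonC d a).
  by rewrite (ncommonC c b) (ncommonC d b) (ncommonC d c); lia.
apply: leq_trans (sum_uniq_subset_le _ abcd_uniq abcd_in); apply: leq_sum => x _.
exact: sum_uniq_subset_le.
Qed.

Lemma excess_defect_ge6 : 6 <= excess + defect.
Proof.
move: abcd_uniq; rewrite /= !inE !negb_or => /and4P[/and3P[ab ac ad] /andP[bc bd] cd _].
have triples : 3 * ([&& 0 < ncommon e a b, 0 < ncommon e a c & 0 < ncommon e b c]
    + [&& 0 < ncommon e a b, 0 < ncommon e a d & 0 < ncommon e b d]
    + [&& 0 < ncommon e a c, 0 < ncommon e a d & 0 < ncommon e c d]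
    + [&& 0 < ncommon e b c, 0 < ncommon e b d & 0 < ncommon e c d]) <= 2 * excess.
  apply: leq_trans excess_ge_triples; rewrite leq_mul2l /=.
  by rewrite !leq_add ?ncommon3_pos.
have missing x y : 8 * ~~ (0 < ncommon e x y) <= 4 * (2 - ncommon e x y).
  by rewrite lt0n negbK; case: eqP => [->|].
have pairs : 8 * (~~ (0 < ncommon e a b) + ~~ (0 < ncommon e a c)
    + ~~ (0 < ncommon e a d) + ~~ (0 < ncommon e b c) + ~~ (0 < ncommon e b d)
    + ~~ (0 < ncommon e c d)) <= 2 * defect.
  apply: leq_trans (leq_mul (leqnn 2) defect_ge_pairs).
  rewrite mulnA !mulnDr; do 5 (apply: leq_add; last exact: missing); exact: missing.
have := six_pairs_bound (0 < ncommon e a b) (0 < ncommon e a c) (0 < ncommon e a d)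
  (0 < ncommon e b c) (0 < ncommon e b d) (0 < ncommon e c d).
lia.
Qed.

End FourVertices.

Lemma nbhd_lower_bound4 : 4 <= #|S| -> #|S| * r + 3 <= #|nbhd e S| + #|S| * (#|S| - 1).
Proof.
move=> S4; have := nbhd_identity.
have : size (take 4 (enum S)) = 4 by rewrite size_take -cardE; case: ltnP => // ?; lia.
have : uniq (take 4 (enum S)) by rewrite take_uniq // enum_uniq.
have : {subset take 4 (enum S) <= S} by move=> x /mem_take; rewrite mem_enum.
case: (take 4 (enum S)) => [|a [|b [|c [|d [|]]]]] //= sub4 uniq4 _.
have := excess_defect_ge6 uniq4 sub4; lia.
Qed.

End NeighbourhoodBound.

Section Hypercube.
Variable n : nat.
Local Notation adj := (@qadj n).

Definition flip (x : cube n) (i : 'I_n) : cube n :=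
  [ffun j => if j == i then ~~ x j else x j].

Definition dif (x y : cube n) : {set 'I_n} := [set i | x i != y i].

Lemma qadjE u v : adj u v = (#|dif u v| == 1). Proof. by []. Qed.

Lemma difC x y : dif x y = dif y x.
Proof. by apply/setP=> i; rewrite !inE eq_sym. Qed.

Lemma dif_eq0 x y : (dif x y == set0) = (x == y).
Proof.
apply/eqP/eqP=> [h|->]; last by apply/setP=> i; rewrite !inE eqxx.
by apply/ffunP=> i; apply/eqP; move/setP/(_ i): h; rewrite !inE => /negbFE.
Qed.

Lemma qadj_sym : symmetric adj.
Proof. by move=> u v; rewrite !qadjE difC. Qed.

Lemma dif_flip x i y :
  dif (flip x i) y = if i \in dif x y then dif x y :\ i else i |: dif x y.
Proof.
apply/setP=> j; case: (boolP (i \in dif x y)) => hi;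
  rewrite !inE ffunE; case: (eqVneq j i) => [->|hji] //=;
  by move: hi; rewrite inE; case: (x i); case: (y i).
Qed.

Lemma card_dif_flip x i y :
  #|dif (flip x i) y| = if i \in dif x y then #|dif x y|.-1 else #|dif x y|.+1.
Proof.
rewrite dif_flip; case: ifP => h; last by rewrite cardsU1 h.
by rewrite (cardsD1 i (dif x y)) h.
Qed.

Lemma flip_adj v i : adj (flip v i) v.
Proof.
have /eqP dvv : dif v v == set0 by rewrite dif_eq0.
by rewrite qadjE card_dif_flip dvv inE cards0.
Qed.

Lemma flip_inj v : injective (flip v).
Proof.
move=> i j /ffunP /(_ i); rewrite !ffunE eqxx.
by case: (eqVneq i j) => // _; case: (v i).
Qed.

Lemma qadj_flip u v : adj u v -> exists i, u = flip v i.
Proof.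
rewrite qadjE => /cards1P[i hi]; exists i; apply/ffunP=> j; rewrite ffunE.
move/setP/(_ j): hi; rewrite !inE.
by case: (eqVneq j i) => [_|_ /negbFE/eqP //]; case: (u j); case: (v j).
Qed.

Lemma qadj_regular v : #|[set u | adj u v]| = n.
Proof.
have -> : [set u | adj u v] = flip v @: setT.
  apply/setP=> u; rewrite inE; apply/idP/imsetP => [/qadj_flip[i ->]|[i _ ->]].
    by exists i.
  exact: flip_adj.
by rewrite card_imset ?cardsT ?card_ord //; apply: flip_inj.
Qed.

Lemma common_nbr_flip u x y : adj u x -> adj u y -> x != y ->
  #|dif x y| = 2 /\ exists2 i, i \in dif x y & u = flip x i.
Proof.
move=> /qadj_flip[i ->]; rewrite qadjE card_dif_flip -dif_eq0 -card_gt0.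
case: ifP => hi /eqP hd hxy; last lia.
by split; [move: hd; rewrite (cardsD1 i) hi; lia | exists i].
Qed.

Lemma qadj_ncommon_le2 x y : x != y -> ncommon adj x y <= 2.
Proof.
move=> hxy; rewrite /ncommon.
case: (set_0Vmem [set u | adj u x && adj u y]) => [->|[u]]; first by rewrite cards0.
rewrite inE => /andP[ux uy]; have [d2 _] := common_nbr_flip ux uy hxy.
rewrite -d2; apply: leq_trans (leq_imset_card (flip x) _).
apply: subset_leq_card; apply/subsetP=> w; rewrite inE => /andP[wx wy].
by have [_ [i hi ->]] := common_nbr_flip wx wy hxy; apply: imset_f.
Qed.

Lemma ncommon_pos x y : x != y -> 0 < ncommon adj x y -> #|dif x y| = 2.
Proof.
move=> hxy /card_gt0P[u]; rewrite inE => /andP[ux uy].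
by have [] := common_nbr_flip ux uy hxy.
Qed.

(* Three distinct vertices which pairwise have a common neighbour have a common
   neighbour: they are x, x + e_i + e_j, x + e_i + e_k for some i, j, k. *)
Lemma qadj_common_nbr3 x y w : x != y -> x != w -> y != w ->
  0 < ncommon adj x y -> 0 < ncommon adj x w -> 0 < ncommon adj y w ->
  exists u, [&& adj u x, adj u y & adj u w].
Proof.
move=> hxy hxw hyw /(ncommon_pos hxy) dxy /(ncommon_pos hxw) dxw /(ncommon_pos hyw).
case: (set_0Vmem (dif x y :&: dif x w)) => [h0|[i]].
  have -> : dif y w = dif x y :|: dif x w.
    apply/setP=> j; move/setP/(_ j): h0; rewrite !inE.
    by case: (x j); case: (y j); case: (w j).
  by rewrite cardsU h0 cards0 dxy dxw.
rewrite inE => /andP[iy iw]; exists (flip x i).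
by rewrite flip_adj /= !qadjE !card_dif_flip iy iw dxy dxw.
Qed.

End Hypercube.

Lemma card_cube n : #|cube n| = 2 ^ n.
Proof. by rewrite card_ffun card_bool card_ord. Qed.

Lemma str_cube_ge n k L : k <= 2 ^ n -> 0 < L ->
  (forall S : {set cube n}, #|S| = k -> L <= #|nbhd (@qadj n) S|) ->
  2 ^ n + 1 + L - k <= str (@qadj n).
Proof.
move=> kp L0 HL; rewrite -(card_cube n) in kp *.
by have := str_ge_nbhd (@qadj_sym n) kp L0; apply.
Qed.

Lemma cube_nbhd_lb n (S : {set cube n}) :
  #|S| * n <= #|nbhd (@qadj n) S| + #|S| * (#|S| - 1).
Proof. exact: nbhd_lower_bound (@qadj_regular n) (@qadj_ncommon_le2 n) S. Qed.

Lemma cube_nbhd_lb4 n (S : {set cube n}) : 4 <= #|S| ->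
  #|S| * n + 3 <= #|nbhd (@qadj n) S| + #|S| * (#|S| - 1).
Proof.
exact: nbhd_lower_bound4 (@qadj_regular n) (@qadj_ncommon_le2 n) (@qadj_common_nbr3 n) S.
Qed.

Lemma le_pow2_2m1 m : 0 < m -> m <= 2 ^ (2 * m - 1).
Proof.
move=> m0; apply: leq_trans (ltnW (ltn_expl m (isT : 1 < 2))) _.
by rewrite leq_pexp2l //; lia.
Qed.

Theorem mainTheorem18 :
  (6 <= str (@qadj 2) /\ 11 <= str (@qadj 3) /\ 21 <= str (@qadj 4)) /\
  (forall n, 5 <= n <= 9 -> 2 ^ n + 4 * n - 12 <= str (@qadj n)) /\
  (forall m, 5 <= m -> 2 ^ (2 * m) + m ^ 2 + 4 <= str (@qadj (2 * m))) /\
  (forall m, 6 <= m ->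
     2 ^ (2 * m - 1) + m ^ 2 - m + 4 <= str (@qadj (2 * m - 1))).
Proof.
split; [split; [|split]|split; [|split]].
- apply: leq_trans (@str_cube_ge 2 1 2 _ _ _) => // S hS.
  by have := cube_nbhd_lb S; rewrite hS; lia.
- apply: leq_trans (@str_cube_ge 3 1 3 _ _ _) => // S hS.
  by have := cube_nbhd_lb S; rewrite hS; lia.
- apply: leq_trans (@str_cube_ge 4 2 6 _ _ _) => // S hS.
  by have := cube_nbhd_lb S; rewrite hS; lia.
- move=> n /andP[n5 n9].
  have k_le : 4 <= 2 ^ n by apply: leq_trans (leq_pexp2l _ n5).
  apply: leq_trans (@str_cube_ge n 4 (4 * n - 9) k_le _ _) => [||S hS]; [lia | lia |].
  by have := cube_nbhd_lb4 (S := S); rewrite hS => /(_ isT); lia.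
- move=> m m5; have k_le : m <= 2 ^ (2 * m).
    by apply: leq_trans (le_pow2_2m1 _) _; rewrite ?leq_pexp2l //; lia.
  apply: leq_trans (@str_cube_ge (2 * m) m (m ^ 2 + m + 3) k_le _ _) => [||S hS];
    [lia | lia |].
  have := cube_nbhd_lb4 (S := S); rewrite hS => /(_ ltac:(lia)); nia.
- move=> m m6; have k_le := @le_pow2_2m1 m ltac:(lia).
  apply: leq_trans (@str_cube_ge (2 * m - 1) m (m ^ 2 + 3) k_le _ _) => [||S hS];
    [lia | lia |].
  have := cube_nbhd_lb4 (S := S); rewrite hS => /(_ ltac:(lia)); nia.
Qed.
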